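(* Let $R_0=\mathrm{diag}(1,1,1)$, $R_1=\mathrm{diag}(1,-1,-1)$, $R_2=\mathrm{diag}(-1,1,-1)$, $R_3=\mathrm{diag}(-1,-1,1)$, and for $j\in\{0,1,2,3\}$ let $$U_j=\{R_je^{\Lambda(\omega)}:\omega\in\mathbb{R}^3,\ \|\omega\|_2<\pi\}\subset SO(3),\qquad \mathcal{U}_j=\Big\{\begin{bmatrix}R&p\\0&1\end{bmatrix}: R\in U_j,\ p\in\mathbb{R}^3\Big\}\subset SE(3).$$ Then $U_0\cup U_1\cup U_2\cup U_3=SO(3)$ and $\mathcal{U}_0\cup\mathcal{U}_1\cup\mathcal{U}_2\cup\mathcal{U}_3=SE(3)$.
   Context: $SO(3)=\{R\in\mathbb{R}^{3\times3}:R^\top R=I,\det R=1\}$, $SE(3)=\{\begin{bmatrix}R&p\\0&1\end{bmatrix}:R\in SO(3),p\in\mathbb{R}^3\}$. For $\omega\in\mathbb{R}^3$, $\Lambda(\omega)=\begin{bmatrix}0&-\omega_3&\omega_2\\\omega_3&0&-\omega_1\\-\omega_2&\omega_1&0\end{bmatrix}$, and $e^{(\cdot)}$ is the matrix exponential. *)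

From HB Require Import structures.
From mathcomp Require Import all_boot all_order all_algebra.
From mathcomp Require Import all_classical all_reals all_analysis.
Set Implicit Arguments. Unset Strict Implicit. Unset Printing Implicit Defensive.
Import Order.TTheory GRing.Theory Num.Theory.
Import numFieldNormedType.Exports.
Local Open Scope classical_set_scope.
Local Open Scope ring_scope.

Definition Lambda (R : realType) (w : 'cV[R]_3) : 'M[R]_3 :=
  \matrix_(i < 3, j < 3)
    (if (val i == 0%N) && (val j == 1%N) then - w 2%:R 0
     else if (val i == 0%N) && (val j == 2%N) then w 1%:R 0
     else if (val i == 1%N) && (val j == 0%N) then w 2%:R 0
     else if (val i == 1%N) && (val j == 2%N) then - w 0 0
     else if (val i == 2%N) && (val j == 0%N) then - w 1%:R 0
     else if (val i == 2%N) && (val j == 1%N) then w 0 0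
     else 0).

Definition expmx (R : realType) (n : nat) (A : 'M[R]_n.+1) : 'M[R]_n.+1 :=
  lim (series (fun k : nat => (k`!%:R)^-1 *: A ^+ k) @ \oo).

Definition norm2 (R : realType) (w : 'cV[R]_3) : R :=
  Num.sqrt (\sum_(i < 3) w i 0 ^+ 2).

Definition SO3 (R : realType) : set 'M[R]_3 :=
  [set Q | Q^T *m Q = 1%:M /\ \det Q = 1].

Definition SE3 (R : realType) : set 'M[R]_(3 + 1) :=
  [set T | exists (Q : 'M[R]_3) (p : 'cV[R]_3),
      @SO3 R Q /\ T = block_mx Q p 0 1%:M].

(* R_0 = diag(1,1,1), R_1 = diag(1,-1,-1), R_2 = diag(-1,1,-1), R_3 = diag(-1,-1,1) *)
Definition Rj (R : realType) (j : 'I_4) : 'M[R]_3 :=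
  diag_mx (\row_(i < 3)
    (if (val j == 0%N) || (val i == (val j).-1) then 1 else -1)).

Definition Uj (R : realType) (j : 'I_4) : set 'M[R]_3 :=
  [set @Rj R j *m expmx (Lambda w) | w in [set w : 'cV[R]_3 | norm2 w < pi]].

Definition calUj (R : realType) (j : 'I_4) : set 'M[R]_(3 + 1) :=
  [set T | exists (Q : 'M[R]_3) (p : 'cV[R]_3),
      @Uj R j Q /\ T = block_mx Q p 0 1%:M].

From HB Require Import structures.
From mathcomp Require Import all_boot all_order all_algebra.
From mathcomp Require Import all_classical all_reals all_analysis.
From mathcomp Require Import ring lra.
Set Implicit Arguments. Unset Strict Implicit. Unset Printing Implicit Defensive.
Import Order.TTheory GRing.Theory Num.Theory.
Import numFieldNormedType.Exports.
Local Open Scope classical_set_scope.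
Local Open Scope ring_scope.

(* Rodrigues' formula: if [B^3 = -B] then [exp(t B) = 1 + sin t B + (1 - cos t) B^2], which is
   read off the exponential series termwise.  For skew [B] this matrix is orthogonal and, being
   the square of the one at [t/2], has determinant 1; hence every [U_j] lies in SO(3).
   Conversely, let [Q] be a rotation with [tr Q > -1].  Put [cos t = (tr Q - 1)/2] with
   [t] in [[0, pi)] and let [v] be the axial vector of [(Q - Q^T)/2].  The orthogonality
   relations and [det Q = 1] give [|v| = sin t] and [Lambda(v)^2 = (1 + cos t)(Q - 1 - Lambda(v))],
   so [Q = exp(Lambda(t v / |v|))] (and [Q = 1] when [v = 0]).  Finally [R_0 + R_1 + R_2 + R_3 = 0],
   so the traces of the [R_j Q] sum to 0 and one of them is nonnegative: [Q = R_j (R_j Q)] lies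
   in [U_j].  The SE(3) statement follows blockwise. *)

Section Rodrigues.
Variables (R : realType) (n : nat) (B : 'M[R]_n.+1).
Hypothesis B3 : B ^+ 3 = - B.

Lemma exprB_double m :
  B ^+ m.*2.+1 = (-1) ^+ m *: B /\ B ^+ m.*2.+2 = (-1) ^+ m *: B ^+ 2.
Proof.
elim: m => [|m [_ IH]]; first by rewrite !expr0 !scale1r.
have odd_pow : B ^+ m.+1.*2.+1 = (-1) ^+ m.+1 *: B.
  by rewrite doubleS exprS IH -scalerAr -exprS B3 exprS mulN1r scaleNr scalerN.
by split; rewrite // exprS odd_pow -scalerAr -expr2.
Qed.

Lemma expmx_series_term th k :
  (k`!%:R)^-1 *: (th *: B) ^+ k =
  (k == 0)%:R *: (1 + B ^+ 2) + sin_coeff th k *: B - cos_coeff th k *: B ^+ 2.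
Proof.
case: k => [|k].
  by rewrite /sin_coeff /cos_coeff /= !expr0 !mul0r scale0r addr0 invr1 !scale1r
    -exprnP expr0 !mulr1 scale1r addrK.
rewrite -[k]odd_double_half /sin_coeff /cos_coeff exprZn scalerA.
case: (odd k) => /=; rewrite ?add1n ?add0n odd_double /= -!exprnP ?uphalf_double ?doubleK.
- rewrite (exprB_double k./2).2 !mul0r !scale0r !add0r scalerA -scaleNr.
  by congr (_ *: _); rewrite [(-1) ^+ _.+1]exprS; ring.
- rewrite (exprB_double k./2).1 !mul0r !scale0r !add0r subr0 scalerA.
  by congr (_ *: _); ring.
Qed.

Definition quadB a b := 1 + a *: B + b *: B ^+ 2.

Definition rodrigues_mx th := quadB (sin th) (1 - cos th).

Lemma series_expmx th k :
  series (fun i => (i`!%:R)^-1 *: (th *: B) ^+ i) k.+1 =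
  (1 + B ^+ 2) + series (sin_coeff th) k.+1 *: B - series (cos_coeff th) k.+1 *: B ^+ 2.
Proof.
rewrite /series /=; under eq_bigr do rewrite expmx_series_term.
rewrite sumrB big_split /= -!scaler_suml; congr (_ + _ - _).
by rewrite big_nat_recl // big1 ?addr0 ?scale1r.
Qed.

Lemma expmx_rodrigues th : expmx (th *: B) = rodrigues_mx th.
Proof.
apply: cvg_lim; first exact: norm_hausdorff.
have -> : rodrigues_mx th = (1 + B ^+ 2) + sin th *: B - cos th *: B ^+ 2.
  by rewrite /rodrigues_mx /quadB scalerBl scale1r addrA (addrAC 1).
rewrite -cvg_shiftS; under [X in X @ \oo]funext do rewrite /= series_expmx.
have cvg_sin : series (sin_coeff th) n.+1 @[n --> \oo] --> sin th.
  by rewrite (cvg_shiftS (series _)) sin.unlock; exact: is_cvg_series_sin_coeff.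
have cvg_cos : series (cos_coeff th) n.+1 @[n --> \oo] --> cos th.
  by rewrite (cvg_shiftS (series _)) cos.unlock; exact: is_cvg_series_cos_coeff.
by apply: cvgB; [apply: cvgD; [exact: cvg_cst|] |]; apply: cvgZr_tmp.
Qed.

Lemma quadBM a b a' b' :
  quadB a b * quadB a' b' = quadB (a + a' - a * b' - a' * b) (b + b' + a * a' - b * b').
Proof.
have B2B : B ^+ 2 * B = - B by rewrite -exprSr B3.
have BB2 : B * B ^+ 2 = - B by rewrite -exprS B3.
have B2B2 : B ^+ 2 * B ^+ 2 = - B ^+ 2 by rewrite {2}expr2 mulrA B2B mulNr -expr2.
rewrite /quadB !mulrDl !mulrDr !mul1r !mulr1 -!scalerAl -!scalerAr !scalerA.
rewrite -expr2 BB2 B2B B2B2.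
by apply/matrixP => i j; rewrite !mxE; ring.
Qed.

Hypothesis Bskew : B^T = - B.

Lemma tr_quadB a b : (quadB a b)^T = quadB (- a) b.
Proof.
have B2sym : (B ^+ 2)^T = B ^+ 2.
  by rewrite expr2 -mulmxE trmx_mul Bskew mulmxE mulrN mulNr opprK.
by rewrite /quadB !linearD /= !linearZ /= trmx1 Bskew B2sym scalerN scaleNr.
Qed.

Lemma rodrigues_mx_orthogonal th : (rodrigues_mx th)^T *m rodrigues_mx th = 1%:M.
Proof.
rewrite /rodrigues_mx tr_quadB mulmxE quadBM.
have sc := cos2Dsin2 th.
have -> : - sin th + sin th - - sin th * (1 - cos th) - sin th * (1 - cos th) = 0 by ring.
have -> : 1 - cos th + (1 - cos th) + - sin th * sin th - (1 - cos th) * (1 - cos th) = 0.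
  by lra.
by rewrite /quadB !scale0r !addr0.
Qed.

Lemma rodrigues_mx_half th : rodrigues_mx th = rodrigues_mx (th / 2) * rodrigues_mx (th / 2).
Proof.
rewrite /rodrigues_mx quadBM.
have sc := cos2Dsin2 (th / 2).
have {1 2}-> : th = th / 2 + th / 2 by field.
by rewrite sinD cosD; congr quadB; lra.
Qed.

Lemma det_rodrigues_mx th : \det (rodrigues_mx th) = 1.
Proof.
have sqr_det : \det (rodrigues_mx (th / 2)) ^+ 2 = 1.
  by rewrite expr2 -{1}det_tr -det_mulmx rodrigues_mx_orthogonal det1.
by rewrite rodrigues_mx_half -mulmxE det_mulmx -expr2.
Qed.
End Rodrigues.

Lemma expmx0 (R : realType) n : expmx (0 : 'M[R]_n.+1) = 1.
Proof.
have zero_cube : (0 : 'M[R]_n.+1) ^+ 3 = - 0 by rewrite expr0n oppr0.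
have := expmx_rodrigues zero_cube 0.
by rewrite scale0r => ->; rewrite /rodrigues_mx /quadB expr0n !scaler0 !addr0.
Qed.

Section Matrix3.
Variable R : realType.

Definition o0 : 'I_3 := @Ordinal 3 0 isT.
Definition o1 : 'I_3 := @Ordinal 3 1 isT.
Definition o2 : 'I_3 := @Ordinal 3 2 isT.

Definition mx3 (a b c d e f g h k : R) : 'M[R]_3 :=
  \matrix_(i, j) nth 0 (nth [::] [:: [:: a; b; c]; [:: d; e; f]; [:: g; h; k]] i) j.

Definition vec3 (x y z : R) : 'cV[R]_3 := \col_i nth 0 [:: x; y; z] i.

Ltac ord3 i := case: i => [[|[|[|?]]] ?] //.

Lemma mx3E (A : 'M[R]_3) :
  A = mx3 (A o0 o0) (A o0 o1) (A o0 o2) (A o1 o0) (A o1 o1) (A o1 o2)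
          (A o2 o0) (A o2 o1) (A o2 o2).
Proof. by apply/matrixP => i j; rewrite mxE; ord3 i; ord3 j; congr (A _ _); apply/val_inj. Qed.

Lemma vec3E (w : 'cV[R]_3) : w = vec3 (w o0 0) (w o1 0) (w o2 0).
Proof. by apply/matrixP => i j; rewrite mxE (ord1 j); ord3 i; congr (w _ _); apply/val_inj. Qed.

Lemma mx3_inj a b c d e f g h k a' b' c' d' e' f' g' h' k' :
  mx3 a b c d e f g h k = mx3 a' b' c' d' e' f' g' h' k' ->
  [/\ [/\ a = a', b = b' & c = c'], [/\ d = d', e = e' & f = f'] & [/\ g = g', h = h' & k = k']].
Proof.
move/matrixP => E.
by move: (E o0 o0) (E o0 o1) (E o0 o2) (E o1 o0) (E o1 o1) (E o1 o2) (E o2 o0) (E o2 o1)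
  (E o2 o2); rewrite !mxE.
Qed.

Lemma mx3_1 : 1 = mx3 1 0 0 0 1 0 0 0 1.
Proof. by apply/matrixP => i j; rewrite !mxE; ord3 i; ord3 j. Qed.

Lemma add_mx3 a b c d e f g h k a' b' c' d' e' f' g' h' k' :
  mx3 a b c d e f g h k + mx3 a' b' c' d' e' f' g' h' k' =
  mx3 (a + a') (b + b') (c + c') (d + d') (e + e') (f + f') (g + g') (h + h') (k + k').
Proof. by apply/matrixP => i j; rewrite !mxE; ord3 i; ord3 j. Qed.

Lemma opp_mx3 a b c d e f g h k :
  - mx3 a b c d e f g h k = mx3 (- a) (- b) (- c) (- d) (- e) (- f) (- g) (- h) (- k).
Proof. by apply/matrixP => i j; rewrite !mxE; ord3 i; ord3 j. Qed.

Lemma scale_mx3 x a b c d e f g h k :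
  x *: mx3 a b c d e f g h k =
  mx3 (x * a) (x * b) (x * c) (x * d) (x * e) (x * f) (x * g) (x * h) (x * k).
Proof. by apply/matrixP => i j; rewrite !mxE; ord3 i; ord3 j. Qed.

Lemma mul_mx3 a b c d e f g h k a' b' c' d' e' f' g' h' k' :
  mx3 a b c d e f g h k * mx3 a' b' c' d' e' f' g' h' k' =
  mx3 (a * a' + b * d' + c * g') (a * b' + b * e' + c * h') (a * c' + b * f' + c * k')
      (d * a' + e * d' + f * g') (d * b' + e * e' + f * h') (d * c' + e * f' + f * k')
      (g * a' + h * d' + k * g') (g * b' + h * e' + k * h') (g * c' + h * f' + k * k').
Proof.
apply/matrixP => i j; rewrite !mxE !big_ord_recl big_ord0 /= !mxE.
by ord3 i; ord3 j => /=; ring.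
Qed.

Lemma trmx_mx3 a b c d e f g h k : (mx3 a b c d e f g h k)^T = mx3 a d g b e h c f k.
Proof. by apply/matrixP => i j; rewrite !mxE; ord3 i; ord3 j. Qed.

Lemma mxtrace_mx3 a b c d e f g h k : \tr (mx3 a b c d e f g h k) = a + e + k.
Proof. by rewrite /mxtrace !big_ord_recl big_ord0 !mxE /= addr0 addrA. Qed.

Lemma det_mx3 a b c d e f g h k :
  \det (mx3 a b c d e f g h k) = a * (e * k - f * h) - b * (d * k - f * g) + c * (d * h - e * g).
Proof.
rewrite (expand_det_row _ o0) !big_ord_recl big_ord0 /cofactor.
rewrite !(expand_det_row _ ord0) !big_ord_recl !big_ord0 /cofactor !det_mx11 !mxE /=.
by rewrite /bump /=; ring.
Qed.

Lemma Lambda_vec3 x y z : Lambda (vec3 x y z) = mx3 0 (- z) y z 0 (- x) (- y) x 0.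
Proof. by apply/matrixP => i j; rewrite !mxE; ord3 i; ord3 j. Qed.

Lemma LambdaZ a (w : 'cV[R]_3) : Lambda (a *: w) = a *: Lambda w.
Proof.
by rewrite (vec3E w) (vec3E (a *: _)) !Lambda_vec3 scale_mx3 !mxE !mulr0 !mulrN.
Qed.

Lemma Lambda0 : Lambda (0 : 'cV[R]_3) = 0.
Proof. by rewrite -(scale0r (0 : 'cV[R]_3)) LambdaZ scale0r. Qed.

Lemma trmx_Lambda (w : 'cV[R]_3) : (Lambda w)^T = - Lambda w.
Proof. by rewrite (vec3E w) Lambda_vec3 trmx_mx3 opp_mx3 !opprK oppr0. Qed.

Lemma sqr_norm2 (w : 'cV[R]_3) : norm2 w ^+ 2 = w o0 0 ^+ 2 + w o1 0 ^+ 2 + w o2 0 ^+ 2.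
Proof.
have sum_sqr : \sum_(i < 3) w i 0 ^+ 2 = w o0 0 ^+ 2 + w o1 0 ^+ 2 + w o2 0 ^+ 2.
  rewrite !big_ord_recl big_ord0 addr0 addrA.
  by congr (w _ 0 ^+ 2 + w _ 0 ^+ 2 + w _ 0 ^+ 2); apply/val_inj.
by rewrite /norm2 sum_sqr sqr_sqrtr // !addr_ge0 ?sqr_ge0.
Qed.

Lemma norm2_ge0 (w : 'cV[R]_3) : 0 <= norm2 w.
Proof. exact: sqrtr_ge0. Qed.

Lemma norm2Z a (w : 'cV[R]_3) : norm2 (a *: w) = `|a| * norm2 w.
Proof.
apply: (@pexpIrn _ 2) => //; rewrite ?nnegrE ?mulr_ge0 ?norm2_ge0 //.
by rewrite exprMn real_normK ?num_real // !sqr_norm2 !mxE; ring.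
Qed.

Lemma norm2_eq0 (w : 'cV[R]_3) : norm2 w = 0 -> w = 0.
Proof.
move=> w0; have := sqr_norm2 w; rewrite w0 expr0n /= => sqr_sum0.
have x0 := sqr_ge0 (w o0 0); have x1 := sqr_ge0 (w o1 0); have x2 := sqr_ge0 (w o2 0).
rewrite (vec3E w); apply/matrixP => i j; rewrite !mxE.
by ord3 i => /=; apply/eqP; rewrite -sqrf_eq0; apply/eqP; lra.
Qed.

Lemma Lambda_cube (w : 'cV[R]_3) : Lambda w ^+ 3 = - (norm2 w ^+ 2) *: Lambda w.
Proof.
rewrite sqr_norm2 (vec3E w) Lambda_vec3 !exprS expr0 mulr1 !mul_mx3 scale_mx3 !mxE /=.
by congr mx3; ring.
Qed.

Lemma SO3_1 : SO3 (1%:M : 'M[R]_3).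
Proof. by split; rewrite ?det1 // trmx1 mulmx1. Qed.

Lemma SO3M (P Q : 'M[R]_3) : SO3 P -> SO3 Q -> SO3 (P *m Q).
Proof.
move=> [PTP detP] [QTQ detQ]; split; last by rewrite det_mulmx detP detQ mulr1.
by rewrite trmx_mul mulmxA -(mulmxA _ _ P) PTP mulmx1 QTQ.
Qed.

Lemma SO3_rodrigues (u : 'cV[R]_3) th : norm2 u = 1 -> SO3 (rodrigues_mx (Lambda u) th).
Proof.
move=> u1; have Lu3 : Lambda u ^+ 3 = - Lambda u by rewrite Lambda_cube u1 expr1n scaleN1r.
split; first exact/rodrigues_mx_orthogonal/trmx_Lambda.
exact/det_rodrigues_mx/trmx_Lambda.
Qed.

Lemma expmx_Lambda_unit (u : 'cV[R]_3) th :
  norm2 u = 1 -> expmx (Lambda (th *: u)) = rodrigues_mx (Lambda u) th.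
Proof.
by move=> u1; rewrite LambdaZ expmx_rodrigues // Lambda_cube u1 expr1n scaleN1r.
Qed.

Lemma expmx_Lambda_SO3 (w : 'cV[R]_3) : SO3 (expmx (Lambda w)).
Proof.
have [->|w_neq0] := eqVneq w 0; first by rewrite Lambda0 expmx0; exact: SO3_1.
have nw_neq0 : norm2 w != 0 by apply: contra_neq w_neq0; exact: norm2_eq0.
pose u := (norm2 w)^-1 *: w.
have u1 : norm2 u = 1 by rewrite norm2Z ger0_norm ?invr_ge0 ?norm2_ge0 // mulVf.
have -> : w = norm2 w *: u by rewrite scalerA mulfV // scale1r.
by rewrite expmx_Lambda_unit //; exact: SO3_rodrigues.
Qed.

Lemma Rj_invol (j : 'I_4) : Rj R j *m Rj R j = 1%:M.
Proof.
rewrite mulmx_diag; apply/matrixP => i k; rewrite !mxE.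
by case: (_ || _); rewrite ?mulrNN mulr1.
Qed.

Lemma Rj_SO3 (j : 'I_4) : SO3 (Rj R j).
Proof.
split; first by rewrite tr_diag_mx Rj_invol.
rewrite det_diag !big_ord_recl big_ord0 !mxE.
by case: j => [[|[|[|[|?]]]] ?] //=; lra.
Qed.

Lemma sum_Rj : \sum_(j < 4) Rj R j = 0.
Proof.
apply/matrixP => i k; rewrite summxE !big_ord_recl big_ord0 !mxE.
by case: (i == k); ord3 i; rewrite ?mulr1n ?mulr0n /=; lra.
Qed.

Lemma exists_Rj_trace_ge0 (Q : 'M[R]_3) : exists j, 0 <= \tr (Rj R j *m Q).
Proof.
apply: contrapT => no_j.
have : \sum_(j < 4) \tr (Rj R j *m Q) < \sum_(j < 4) 0.
  apply: ltr_sum => [|j _]; first by apply/hasP; exists ord0; rewrite ?mem_index_enum.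
  by rewrite ltNge; apply/negP => ?; apply: no_j; exists j.
have -> : \sum_(j < 4) \tr (Rj R j *m Q) = \tr ((\sum_(j < 4) Rj R j) *m Q).
  by rewrite mulmx_suml raddf_sum.
by rewrite big1_eq sum_Rj mul0mx mxtrace0 ltxx.
Qed.

Lemma Uj_sub_SO3 (j : 'I_4) : @Uj R j `<=` @SO3 R.
Proof. by move=> _ [w _ <-]; apply: SO3M; [exact: Rj_SO3 | exact: expmx_Lambda_SO3]. Qed.

Lemma SO3_mx3_axis a b c d e f g h k :
  SO3 (mx3 a b c d e f g h k) ->
  let c0 := (a + e + k - 1) / 2 in
  let v := vec3 ((h - f) / 2) ((c - g) / 2) ((d - b) / 2) in
  norm2 v ^+ 2 = 1 - c0 ^+ 2 /\
  Lambda v ^+ 2 = (1 + c0) *: (mx3 a b c d e f g h k - 1 - Lambda v).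
Proof.
set M := mx3 _ _ _ _ _ _ _ _ _ => -[MTM detM] c0 v.
have MTM1 : M^T * M = 1 by rewrite -mulmxE.
have MMT1 : M * M^T = 1 by rewrite -mulmxE mulmx1C.
pose C := mx3 (e * k - f * h) (f * g - d * k) (d * h - e * g)
              (c * h - b * k) (a * k - c * g) (b * g - a * h)
              (b * f - c * e) (c * d - a * f) (a * e - b * d).
(* [C] is the cofactor matrix, so [C^T * M = det M = 1] and hence [C = M]. *)
have CTM : C^T * M = 1.
  by rewrite trmx_mx3 mul_mx3 mx3_1 -detM det_mx3; congr mx3; ring.
have CT : C^T = M^T by rewrite -[C^T]mulr1 -MMT1 mulrA CTM mul1r.
rewrite /M !trmx_mx3 !mul_mx3 mx3_1 in MTM1 MMT1 CT; rewrite det_mx3 in detM.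
move/mx3_inj: MTM1 => [[x1 x2 x3] [x4 x5 x6] [x7 x8 x9]].
move/mx3_inj: MMT1 => [[y1 y2 y3] [y4 y5 y6] [y7 y8 y9]].
move/mx3_inj: CT => [[z1 z2 z3] [z4 z5 z6] [z7 z8 z9]].
split; first by rewrite sqr_norm2 !mxE /= /c0; lra.
rewrite Lambda_vec3 expr2 mul_mx3 mx3_1 !opp_mx3 !add_mx3 scale_mx3 /c0.
by congr mx3; lra.
Qed.

Lemma SO3_log (Q : 'M[R]_3) :
  SO3 Q -> -1 < \tr Q -> exists2 w, norm2 w < pi & expmx (Lambda w) = Q.
Proof.
move=> HQ; rewrite (mx3E Q) mxtrace_mx3 in HQ * => tr_gtN1.
have [] := SO3_mx3_axis HQ.
set c0 := (_ - 1) / 2; set v := vec3 _ _ _; set M := mx3 _ _ _ _ _ _ _ _ _ => nv Lv.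
have c0_gt : -1 < c0 by rewrite /c0; lra.
have c0_le1 : c0 <= 1 by have := sqr_ge0 (norm2 v); nra.
have [v0|v_neq0] := eqVneq (norm2 v) 0.
  have c0_1 : c0 = 1 by move: nv; rewrite v0 expr0n /=; nra.
  exists 0; first by rewrite /norm2 big1 => [|i _]; rewrite ?sqrtr0 ?pi_gt0 // mxE expr2 mul0r.
  move: Lv; rewrite Lambda0 expmx0 (norm2_eq0 v0) Lambda0 expr2 mul0r c0_1 subr0.
  by move/esym/eqP; rewrite scaler_eq0 -mulr2n pnatr_eq0 subr_eq0 => /eqP.
pose th := acos c0; pose u := (norm2 v)^-1 *: v.
have c0_bnd : -1 <= c0 <= 1 by rewrite c0_le1 ltW.
have cos_th : cos th = c0 by rewrite acosK // in_itv.
have sin_th : sin th = norm2 v.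
  by rewrite sin_acos // -nv sqrtr_sqr ger0_norm ?norm2_ge0.
have u1 : norm2 u = 1 by rewrite norm2Z ger0_norm ?invr_ge0 ?norm2_ge0 // mulVf.
exists (th *: u).
  by rewrite norm2Z u1 mulr1 ger0_norm ?acos_ltpi ?c0_gt ?acos_ge0.
rewrite expmx_Lambda_unit // /rodrigues_mx /quadB sin_th cos_th LambdaZ scalerA mulfV //.
have coef : (1 - c0) * (norm2 v)^-1 ^+ 2 * (1 + c0) = 1.
  rewrite mulrAC (_ : (1 - c0) * (1 + c0) = norm2 v ^+ 2); last by rewrite nv; ring.
  by rewrite exprVn mulfV // sqrf_eq0.
rewrite scale1r exprZn Lv !scalerA coef scale1r.
by apply/matrixP => i j; rewrite !mxE; ring.
Qed.

Lemma bigcup_Uj : \bigcup_(j in [set: 'I_4]) @Uj R j = @SO3 R.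
Proof.
apply/seteqP; split => [Q [j _ /Uj_sub_SO3] // | Q SO3Q].
have [j tr_ge0] := exists_Rj_trace_ge0 Q; exists j => //.
have [w w_lt_pi expw] := SO3_log (SO3M (Rj_SO3 j) SO3Q) (lt_le_trans (ltrN10 R) tr_ge0).
by exists w => //; rewrite expw mulmxA Rj_invol mul1mx.
Qed.
End Matrix3.

Theorem mainTheorem5 (R : realType) :
  (\bigcup_(j in [set: 'I_4]) @Uj R j = @SO3 R) /\
  (\bigcup_(j in [set: 'I_4]) @calUj R j = @SE3 R).
Proof.
split; first exact: bigcup_Uj.
apply/seteqP; split.
- by move=> _ [j _ [Q [p [UjQ ->]]]]; exists Q, p; split => //; exact: Uj_sub_SO3 UjQ.
- move=> _ [Q [p [SO3Q ->]]].
  have [j _ UjQ] : (\bigcup_(j in [set: 'I_4]) @Uj R j) Q by rewrite bigcup_Uj.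
  by exists j => //; exists Q, p.
Qed.
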